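(* Let $M$ be a recursively enumerable language over a finite alphabet $\Sigma$ which does not contain the empty word. Then for each of the calculi $\mathcal{M}'^{-,\mathrm{mult}}_{2018}$ and $\mathcal{F}^{-,\mathrm{mult}}_{2018}$ there exists a grammar based on that calculus which generates $M$, both in the sense of s-recognition and in the sense of t-recognition.
   Context: Formulae are built from a countable set of variables by $\backslash,/,\cdot$ and the unary $\langle\rangle$, $[]^{-1}$, $!$ (no $\mathbf1$, no $\wedge,\vee$). $\mathcal{M}'^{-,\mathrm{mult}}_{2018}$ (with stoups): a stoup is a finite multiset of formulae ($\varnothing$ empty); a tree term is a formula or $[\Xi]$ with $\Xi$ a meta-formula; a meta-formula is $\zeta;\Gamma$ ($\zeta$ a stoup, $\Gamma$ a finite sequence of tree terms, empty $\Lambda$), $\varnothing;\Gamma$ written $\Gamma$; comma is concatenation / multiset union; sequents $\Xi\to C$; $\Xi(\Theta)$ designates an occurrence of a meta-formula $\Theta$ which is $\Xi$ itself or the content of a bracket $[\Theta]$ at any depth. Rules: axiom $A\to A$; ($/L$) from $\zeta_1;\Gamma\to B$ and $\Xi(\zeta_2;\Delta_1,C,\Delta_2)\to D$ infer $\Xi(\zeta_1,\zeta_2;\Delta_1,C/B,\Gamma,\Delta_2)\to D$; ($/R$) from $\zeta;\Gamma,B\to C$ infer $\zeta;\Gamma\to C/B$, only if $\Gamma\ne\Lambda$ or $\zeta\ne\varnothing$; ($\backslash L$) from $\zeta_1;\Gamma\to A$ and $\Xi(\zeta_2;\Delta_1,C,\Delta_2)\to D$ infer $\Xi(\zeta_1,\zeta_2;\Delta_1,\Gamma,A\backslash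 C,\Delta_2)\to D$; ($\backslash R$) from $\zeta;A,\Gamma\to C$ infer $\zeta;\Gamma\to A\backslash C$, only if $\Gamma\neq\Lambda$ or $\zeta\neq\varnothing$; ($\cdot L$) from $\Xi(\zeta;\Delta_1,A,B,\Delta_2)\to D$ infer $\Xi(\zeta;\Delta_1,A\cdot B,\Delta_2)\to D$; ($\cdot R$) from $\zeta_1;\Delta\to A$, $\zeta_2;\Gamma\to B$ infer $\zeta_1,\zeta_2;\Delta,\Gamma\to A\cdot B$; ($[]^{-1}L$) from $\Xi(\zeta;\Delta_1,A,\Delta_2)\to B$ infer $\Xi(\zeta;\Delta_1,[[]^{-1}A],\Delta_2)\to B$; ($[]^{-1}R$) from $[\Xi]\to A$ infer $\Xi\to[]^{-1}A$; ($\langle\rangle L$) from $\Xi(\zeta;\Delta_1,[A],\Delta_2)\to B$ infer $\Xi(\zeta;\Delta_1,\langle\rangle A,\Delta_2)\to B$; ($\langle\rangle R$) from $\Xi\to A$ infer $[\Xi]\to\langle\rangle A$; ($!L$) from $\Xi(\zeta,A;\Gamma_1,\Gamma_2)\to B$ infer $\Xi(\zeta;\Gamma_1,!A,\Gamma_2)\to B$; ($!P$) from $\Xi(\zeta;\Gamma_1,A,\Gamma_2)\to B$ infer $\Xi(\zeta,A;\Gamma_1,\Gamma_2)\to B$; ($!R'$) from $A;\Lambda\to B$ infer $A;\Lambda\to!B$; ($!C'$) from $\Xi(\zeta,A;\Gamma_1,[\zeta',A;\Gamma_2],\Gamma_3)\to B$ infer $\Xi(\zeta,A;\Gamma_1,[[\zeta';\Gamma_2]],\Gamma_3)\to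 B$, only if $\Gamma_2\ne\Lambda$ or $\zeta'\ne\varnothing$. Cut is not a rule. $\mathcal{F}^{-,\mathrm{mult}}_{2018}$ (stoup-free): meta-formulae are finite sequences of tree terms; rules: axiom $A\to A$; the stoup-free versions of $/L$, $/R$ (only if $\Gamma\ne\Lambda$), $\backslash L$, $\backslash R$ (only if $\Gamma\ne\Lambda$), $\cdot L$, $\cdot R$, $[]^{-1}L$, $[]^{-1}R$, $\langle\rangle L$, $\langle\rangle R$ (drop all stoups); ($!L$) from $\Xi(\Delta_1,A,\Delta_2)\to C$ infer $\Xi(\Delta_1,!A,\Delta_2)\to C$; ($!P_1$) from $\Xi(\Delta_1,!A,\Phi,\Delta_2)\to C$ infer $\Xi(\Delta_1,\Phi,!A,\Delta_2)\to C$; ($!P_2$) the converse; ($!R$) from $!A\to B$ infer $!A\to!B$; ($!C$) from $\Xi(!A,\Gamma_1,[!A,\Gamma_2],\Gamma_3)\to C$ infer $\Xi(!A,\Gamma_1,[[\Gamma_2]],\Gamma_3)\to C$, only if $\Gamma_2\neq\Lambda$; (cut) from $\Pi\to A$ and $\Xi(\Gamma_1,A,\Gamma_2)\to C$ infer $\Xi(\Gamma_1,\Pi,\Gamma_2)\to C$. Grammars: a grammar is a triple $\langle\Sigma,\rhd,H\rangle$ with $H$ a formula and $\rhd$ a finite relation between letters of $\Sigma$ and formulae. s-recognition accepts $a_1\dots a_n$ if $A_1,\dots,A_n\to H$ (no brackets, empty stoups) is derivable for some $A_i$ with $a_i\rhd A_i$; t-recognition accepts $a_1\dots a_n$ if $\Pi\to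 H$ is derivable for some meta-formula $\Pi$ with empty stoups which becomes $A_1,\dots,A_n$ after removing all brackets (not bracket modalities), for some $a_i\rhd A_i$. The grammar generates $M$ in a given sense if the set of words accepted in that sense equals $M$. *)

From HB Require Import structures.
From mathcomp Require Import all_boot.
From mathcomp Require Import finmap multiset.

Set Implicit Arguments.
Unset Strict Implicit.
Unset Printing Implicit Defensive.

Local Open Scope fset_scope.
Local Open Scope mset_scope.

Inductive formula : Type :=
| Var   of nat
| Under of formula & formula   (* Under A C  =  A \ C *)
| Over  of formula & formula   (* Over C B   =  C / B *)
| Prod  of formula & formula
| Diam  of formula
| BoxInv of formula
| Bang  of formula.

Fixpoint formula_enc (A : formula) : GenTree.tree nat :=
  match A with
  | Var n => GenTree.Leaf n
  | Under A B => GenTree.Node 0 [:: formula_enc A; formula_enc B]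
  | Over A B => GenTree.Node 1 [:: formula_enc A; formula_enc B]
  | Prod A B => GenTree.Node 2 [:: formula_enc A; formula_enc B]
  | Diam A => GenTree.Node 3 [:: formula_enc A]
  | BoxInv A => GenTree.Node 4 [:: formula_enc A]
  | Bang A => GenTree.Node 5 [:: formula_enc A]
  end.

Fixpoint formula_dec (t : GenTree.tree nat) : option formula :=
  match t with
  | GenTree.Leaf n => Some (Var n)
  | GenTree.Node 0 [:: a; b] =>
      obind (fun A => omap (Under A) (formula_dec b)) (formula_dec a)
  | GenTree.Node 1 [:: a; b] =>
      obind (fun A => omap (Over A) (formula_dec b)) (formula_dec a)
  | GenTree.Node 2 [:: a; b] =>
      obind (fun A => omap (Prod A) (formula_dec b)) (formula_dec a)
  | GenTree.Node 3 [:: a] => omap Diam (formula_dec a)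
  | GenTree.Node 4 [:: a] => omap BoxInv (formula_dec a)
  | GenTree.Node 5 [:: a] => omap Bang (formula_dec a)
  | _ => None
  end.

Lemma formula_encK : pcancel formula_enc formula_dec.
Proof. by elim=> //= [A -> B -> | A -> B -> | A -> B -> | A -> | A -> | A ->]. Qed.

HB.instance Definition _ := Countable.copy formula (pcan_type formula_encK).

Notation stoup := (multiset formula).

(* Tree terms: a formula, or a bracket [Xi] around a meta-formula       *)
(* Xi = (zeta ; Gamma), stored as its stoup and its sequence.           *)
Inductive sterm : Type :=
| SF of formula
| SB of stoup & seq sterm.

Definition smeta := (stoup * seq sterm)%type.

Definition SBr (X : smeta) : sterm := SB X.1 X.2.

Definition sform (A : formula) : smeta := (mset0, [:: SF A]).

(* Contexts Xi( . ): the hole is either Xi itself or the content of a   *)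
(* bracket at any depth.  SIn z G1 c G2  is  z ; G1, [c], G2.           *)
Inductive sctx : Type :=
| SHole
| SIn of stoup & seq sterm & sctx & seq sterm.

Fixpoint sfill (c : sctx) (T : smeta) : smeta :=
  match c with
  | SHole => T
  | SIn z G1 c' G2 => (z, G1 ++ SBr (sfill c' T) :: G2)
  end.

Inductive Mder : smeta -> formula -> Prop :=
| M_ax A : Mder (sform A) A
| M_OverL (X : sctx) z1 z2 G D1 D2 B C D :
    Mder (z1, G) B ->
    Mder (sfill X (z2, D1 ++ SF C :: D2)) D ->
    Mder (sfill X (z1 `+` z2, D1 ++ SF (Over C B) :: G ++ D2)) D
| M_OverR z G B C :
    G <> [::] \/ z <> mset0 ->
    Mder (z, G ++ [:: SF B]) C ->
    Mder (z, G) (Over C B)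
| M_UnderL (X : sctx) z1 z2 G D1 D2 A C D :
    Mder (z1, G) A ->
    Mder (sfill X (z2, D1 ++ SF C :: D2)) D ->
    Mder (sfill X (z1 `+` z2, D1 ++ G ++ SF (Under A C) :: D2)) D
| M_UnderR z G A C :
    G <> [::] \/ z <> mset0 ->
    Mder (z, SF A :: G) C ->
    Mder (z, G) (Under A C)
| M_ProdL (X : sctx) z D1 D2 A B D :
    Mder (sfill X (z, D1 ++ SF A :: SF B :: D2)) D ->
    Mder (sfill X (z, D1 ++ SF (Prod A B) :: D2)) D
| M_ProdR z1 z2 D G A B :
    Mder (z1, D) A -> Mder (z2, G) B ->
    Mder (z1 `+` z2, D ++ G) (Prod A B)
| M_BoxInvL (X : sctx) z D1 D2 A B :
    Mder (sfill X (z, D1 ++ SF A :: D2)) B ->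
    Mder (sfill X (z, D1 ++ SBr (sform (BoxInv A)) :: D2)) B
| M_BoxInvR (Xi : smeta) A :
    Mder (mset0, [:: SBr Xi]) A ->
    Mder Xi (BoxInv A)
| M_DiamL (X : sctx) z D1 D2 A B :
    Mder (sfill X (z, D1 ++ SBr (sform A) :: D2)) B ->
    Mder (sfill X (z, D1 ++ SF (Diam A) :: D2)) B
| M_DiamR (Xi : smeta) A :
    Mder Xi A ->
    Mder (mset0, [:: SBr Xi]) (Diam A)
| M_BangL (X : sctx) z G1 G2 A B :
    Mder (sfill X (z `+` [mset A], G1 ++ G2)) B ->
    Mder (sfill X (z, G1 ++ SF (Bang A) :: G2)) B
| M_BangP (X : sctx) z G1 G2 A B :
    Mder (sfill X (z, G1 ++ SF A :: G2)) B ->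
    Mder (sfill X (z `+` [mset A], G1 ++ G2)) B
| M_BangR' A B :
    Mder ([mset A], [::]) B ->
    Mder ([mset A], [::]) (Bang B)
| M_BangC' (X : sctx) z z' G1 G2 G3 A B :
    G2 <> [::] \/ z' <> mset0 ->
    Mder (sfill X (z `+` [mset A], G1 ++ SBr (z' `+` [mset A], G2) :: G3)) B ->
    Mder (sfill X (z `+` [mset A],
                   G1 ++ SBr (mset0, [:: SBr (z', G2)]) :: G3)) B.

Fixpoint sterm_empty (t : sterm) : bool :=
  match t with
  | SF _ => true
  | SB z G => (z == mset0) && all sterm_empty G
  end.
Definition smeta_empty (X : smeta) : bool :=
  (X.1 == mset0) && all sterm_empty X.2.

Fixpoint sterm_leaves (t : sterm) : seq formula :=
  match t with
  | SF A => [:: A]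
  | SB _ G => flatten (map sterm_leaves G)
  end.
Definition smeta_leaves (X : smeta) : seq formula :=
  flatten (map sterm_leaves X.2).


Inductive fterm : Type :=
| FF of formula
| FB of seq fterm.

Definition fmeta := seq fterm.

Inductive fctx : Type :=
| FHole
| FIn of seq fterm & fctx & seq fterm.   (* G1, [c], G2 *)

Fixpoint ffill (c : fctx) (T : fmeta) : fmeta :=
  match c with
  | FHole => T
  | FIn G1 c' G2 => G1 ++ FB (ffill c' T) :: G2
  end.

Inductive Fder : fmeta -> formula -> Prop :=
| F_ax A : Fder [:: FF A] A
| F_OverL (X : fctx) G D1 D2 B C D :
    Fder G B ->
    Fder (ffill X (D1 ++ FF C :: D2)) D ->
    Fder (ffill X (D1 ++ FF (Over C B) :: G ++ D2)) D
| F_OverR G B C :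
    G <> [::] ->
    Fder (G ++ [:: FF B]) C ->
    Fder G (Over C B)
| F_UnderL (X : fctx) G D1 D2 A C D :
    Fder G A ->
    Fder (ffill X (D1 ++ FF C :: D2)) D ->
    Fder (ffill X (D1 ++ G ++ FF (Under A C) :: D2)) D
| F_UnderR G A C :
    G <> [::] ->
    Fder (FF A :: G) C ->
    Fder G (Under A C)
| F_ProdL (X : fctx) D1 D2 A B D :
    Fder (ffill X (D1 ++ FF A :: FF B :: D2)) D ->
    Fder (ffill X (D1 ++ FF (Prod A B) :: D2)) D
| F_ProdR D G A B :
    Fder D A -> Fder G B -> Fder (D ++ G) (Prod A B)
| F_BoxInvL (X : fctx) D1 D2 A B :
    Fder (ffill X (D1 ++ FF A :: D2)) B ->
    Fder (ffill X (D1 ++ FB [:: FF (BoxInv A)] :: D2)) B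
| F_BoxInvR (Xi : fmeta) A :
    Fder [:: FB Xi] A -> Fder Xi (BoxInv A)
| F_DiamL (X : fctx) D1 D2 A B :
    Fder (ffill X (D1 ++ FB [:: FF A] :: D2)) B ->
    Fder (ffill X (D1 ++ FF (Diam A) :: D2)) B
| F_DiamR (Xi : fmeta) A :
    Fder Xi A -> Fder [:: FB Xi] (Diam A)
| F_BangL (X : fctx) D1 D2 A C :
    Fder (ffill X (D1 ++ FF A :: D2)) C ->
    Fder (ffill X (D1 ++ FF (Bang A) :: D2)) C
| F_BangP1 (X : fctx) D1 D2 Phi A C :
    Fder (ffill X (D1 ++ FF (Bang A) :: Phi ++ D2)) C ->
    Fder (ffill X (D1 ++ Phi ++ FF (Bang A) :: D2)) C
| F_BangP2 (X : fctx) D1 D2 Phi A C :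
    Fder (ffill X (D1 ++ Phi ++ FF (Bang A) :: D2)) C ->
    Fder (ffill X (D1 ++ FF (Bang A) :: Phi ++ D2)) C
| F_BangR A B :
    Fder [:: FF (Bang A)] B -> Fder [:: FF (Bang A)] (Bang B)
| F_BangC (X : fctx) G1 G2 G3 A C :
    G2 <> [::] ->
    Fder (ffill X (FF (Bang A) :: G1 ++ FB (FF (Bang A) :: G2) :: G3)) C ->
    Fder (ffill X (FF (Bang A) :: G1 ++ FB [:: FB G2] :: G3)) C
| F_cut (X : fctx) Pi G1 G2 A C :
    Fder Pi A ->
    Fder (ffill X (G1 ++ FF A :: G2)) C ->
    Fder (ffill X (G1 ++ Pi ++ G2)) C.

Fixpoint fterm_leaves (t : fterm) : seq formula :=
  match t with
  | FF A => [:: A]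
  | FB G => flatten (map fterm_leaves G)
  end.
Definition fmeta_leaves (X : fmeta) : seq formula :=
  flatten (map fterm_leaves X).

(* A grammar <Sigma, |>, H>: the finite relation |> is given by the      *)
(* finite list of its pairs (a, A), meaning a |> A.                      *)
Record grammar (Sigma : finType) := Grammar {
  lex : seq (Sigma * formula);
  target : formula
}.

Definition assigns (Sigma : finType) (G : grammar Sigma)
    (w : seq Sigma) (As : seq formula) : Prop :=
  size As = size w /\ all (fun p => p \in lex G) (zip w As).

Definition s_rec_M (Sigma : finType) (G : grammar Sigma) (w : seq Sigma) : Prop :=
  exists As, assigns G w As /\ Mder (mset0, map SF As) (target G).

Definition t_rec_M (Sigma : finType) (G : grammar Sigma) (w : seq Sigma) : Prop :=
  exists As (Pi : smeta), assigns G w As /\ smeta_empty Pi /\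
    smeta_leaves Pi = As /\ Mder Pi (target G).

Definition s_rec_F (Sigma : finType) (G : grammar Sigma) (w : seq Sigma) : Prop :=
  exists As, assigns G w As /\ Fder (map FF As) (target G).

Definition t_rec_F (Sigma : finType) (G : grammar Sigma) (w : seq Sigma) : Prop :=
  exists As (Pi : fmeta), assigns G w As /\
    fmeta_leaves Pi = As /\ Fder Pi (target G).

(* configuration: state, tape left of the head (nearest cell first),     *)
(* tape from the head rightwards; missing cells are blank.               *)
Section TM.
Variables (Q Gam : finType) (blank : Gam)
          (delta : Q -> Gam -> option (Q * Gam * bool)).
  (* delta q a = Some (q', b, right?) : write b, go to q', move right if *)
  (* the boolean is true and left otherwise; None = halt.               *)

Definition tm_config := (Q * seq Gam * seq Gam)%type.

Definition tm_step (c : tm_config) : option tm_config :=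
  let: (q, l, r) := c in
  let a := head blank r in
  let r' := behead r in
  match delta q a with
  | None => None
  | Some (q', b, true) => Some (q', b :: l, r')
  | Some (q', b, false) => Some (q', behead l, head blank l :: b :: r')
  end.

Fixpoint tm_run (n : nat) (c : tm_config) : option tm_config :=
  match n with
  | 0 => Some c
  | n'.+1 => obind (tm_run n') (tm_step c)
  end.
End TM.

Definition recursively_enumerable (Sigma : finType) (M : seq Sigma -> Prop) : Prop :=
  exists (Q Gam : finType) (blank : Gam) (inp : Sigma -> Gam)
         (delta : Q -> Gam -> option (Q * Gam * bool)) (q0 qacc : Q),
    injective inp /\ (forall a, inp a != blank) /\
    forall w : seq Sigma,
      M w <-> exists n l r,
        tm_run blank delta n (q0, [::], map inp w) = Some (qacc, l, r).

(* A deterministic machine accepting M is compiled into a string rewriting system in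
   which the configuration word [0 (reversed left tape) q (right tape) 1] rewrites to the
   word [2] exactly when the machine accepts from that configuration.  A rule [x w -> y z]
   becomes the formula [U = []^-1 (x \ (y <><>E z) / w) / E].  The goal formula surrounds
   the input with the initial configuration, the banged axioms [!U] of all rules, and a slot
   [[E]] at the head; !-contraction copies an axiom into the slot, where it performs one
   rewriting step, so every accepting run yields a derivation in either calculus.
   Conversely, both calculi are sound in the model where a formula denotes a set of words
   closed under inverse rewriting, brackets are transparent and [E] denotes the words that
   rewrite to the empty word.  Transparency makes any bracketing of the input letters denote
   the input word, so t-recognition implies that the initial configuration rewrites to [2],
   and the rewriting system can only follow the run of the machine up to acceptance. *)

From HB Require Import structures.
From mathcomp Require Import all_boot.
From mathcomp Require Import multiset.

Set Implicit Arguments.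
Unset Strict Implicit.
Unset Printing Implicit Defensive.

Local Open Scope mset_scope.

(** * Rewriting systems and their model *)

Definition empty_var := 3.
Definition Evar := Var empty_var.

Section Model.
Variable rs : seq (seq nat * seq nat).

Inductive rewrites : seq nat -> seq nat -> Prop :=
| rewrites_refl t : rewrites t t
| rewrites_step u l r v t :
    (l, r) \in rs -> rewrites (u ++ r ++ v) t -> rewrites (u ++ l ++ v) t.

Lemma rewrites_trans s t u : rewrites s t -> rewrites t u -> rewrites s u.
Proof. by elim=> // {}s l r v {}t lr _ IH /IH; apply: rewrites_step. Qed.

Lemma rewrites_ctx a b t t' : rewrites t t' -> rewrites (a ++ t ++ b) (a ++ t' ++ b).
Proof.
elim=> [t0|u l r v t0 lr _ IH]; first exact: rewrites_refl.
have catE s : a ++ (u ++ s ++ v) ++ b = (a ++ u) ++ s ++ (v ++ b) by rewrite !catA.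
by rewrite catE; apply: rewrites_step lr _; rewrite -catE.
Qed.

Lemma rewrites_cat a a' b b' :
  rewrites a a' -> rewrites b b' -> rewrites (a ++ b) (a' ++ b').
Proof.
move=> Ha Hb; apply: (@rewrites_trans _ (a' ++ b)); first exact: (rewrites_ctx [::] b Ha).
by have := rewrites_ctx a' [::] Hb; rewrite !cats0.
Qed.

Lemma rewrites_rule l r : (l, r) \in rs -> rewrites l r.
Proof.
move=> lr; have := @rewrites_step [::] l r [::] r lr.
by rewrite /= !cats0; apply; apply: rewrites_refl.
Qed.

Fixpoint interp (A : formula) : seq nat -> Prop :=
  match A with
  | Var n => fun t => rewrites t (if n == empty_var then [::] else [:: n])
  | Under A C => fun y => forall x, interp A x -> interp C (x ++ y)
  | Over C B => fun y => forall x, interp B x -> interp C (y ++ x)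
  | Prod A B => fun t => exists a b, [/\ interp A a, interp B b & rewrites t (a ++ b)]
  | Diam A | BoxInv A => interp A
  | Bang A => fun t => interp A [::] /\ rewrites t [::]
  end.

Lemma interp_rewrites A t t' : rewrites t t' -> interp A t' -> interp A t.
Proof.
elim: A t t' => [n|A _ C IHC|C IHC B _|A _ B _|A IHA|A IHA|A _] t t' tt' /=.
- exact: rewrites_trans.
- by move=> HC x /HC; apply: IHC; have := rewrites_ctx x [::] tt'; rewrite !cats0.
- by move=> HC x /HC; apply: IHC; apply: (rewrites_ctx [::] x tt').
- by case=> a [b [Ha Hb t'ab]]; exists a, b; split=> //; apply: rewrites_trans t'ab.
- exact: IHA.
- exact: IHA.
- by case=> A0 t'0; split=> //; apply: rewrites_trans t'0.
Qed.

Lemma interp_var n : n != empty_var -> interp (Var n) [:: n].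
Proof. by move=> /negbTE /= ->; apply: rewrites_refl. Qed.

Lemma interp_Evar : interp Evar [::].
Proof. exact: rewrites_refl. Qed.

End Model.

Fixpoint seq_interp (T : Type) (f : T -> seq nat -> Prop) (G : seq T) : seq nat -> Prop :=
  match G with
  | [::] => fun t => t = [::]
  | x :: G' => fun t => exists a b, [/\ t = a ++ b, f x a & seq_interp f G' b]
  end.

Lemma seq_interp_cat T f (G1 G2 : seq T) t :
  seq_interp f (G1 ++ G2) t <->
  exists a b, [/\ t = a ++ b, seq_interp f G1 a & seq_interp f G2 b].
Proof.
elim: G1 t => [|x G1 IH] t /=.
  by split=> [H|[a [b [-> -> H]]]]; first by exists [::], t.
split=> [[a [b [-> Ha /IH [c [d [-> Hc Hd]]]]]]|[a [b [-> [c [d [-> Hc Hd]]] Hb]]]].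
  by exists (a ++ c), d; rewrite catA; split=> //; exists a, c.
by exists c, (d ++ b); rewrite catA; split=> //; apply/IH; exists d, b.
Qed.

Lemma seq_interp1 T f (x : T) t : seq_interp f [:: x] t <-> f x t.
Proof. by split=> [[a [b [-> Ha ->]]]|H]; [rewrite cats0|exists t, [::]; rewrite cats0]. Qed.

(** * Soundness of both calculi *)

Section FSoundness.
Variable rs : seq (seq nat * seq nat).
Local Notation rewrites := (rewrites rs).
Local Notation interp := (interp rs).

Fixpoint fterm_interp (x : fterm) : seq nat -> Prop :=
  match x with
  | FF A => interp A
  | FB G => seq_interp fterm_interp G
  end.

Local Notation fmeta_interp := (seq_interp fterm_interp).

Definition fentails (G G' : fmeta) :=
  forall t, fmeta_interp G t -> exists2 t', rewrites t t' & fmeta_interp G' t'.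

Definition fvalid (G : fmeta) (C : formula) := forall t, fmeta_interp G t -> interp C t.

Lemma fentails_refl G : fentails G G.
Proof. by move=> t Ht; exists t; first exact: rewrites_refl. Qed.

Lemma fentails_cat G1 G2 G1' G2' :
  fentails G1 G1' -> fentails G2 G2' -> fentails (G1 ++ G2) (G1' ++ G2').
Proof.
move=> H1 H2 t /seq_interp_cat [a [b [-> /H1 [a' aa' Ha'] /H2 [b' bb' Hb']]]].
by exists (a' ++ b'); [apply: rewrites_cat|apply/seq_interp_cat; exists a', b'].
Qed.

Lemma fentails_mid D1 D2 T T' :
  fentails T T' -> fentails (D1 ++ T ++ D2) (D1 ++ T' ++ D2).
Proof. by move=> TT'; do 2?apply: fentails_cat => //; apply: fentails_refl. Qed.

Lemma fentails_ctx X T T' : fentails T T' -> fentails (ffill X T) (ffill X T').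
Proof.
move=> TT'; elim: X => //= G1 X IH G2.
apply: (fentails_mid (T := [:: FB _]) (T' := [:: FB _])) => t /seq_interp1 /IH [t' tt' Ht'].
by exists t' => //; apply/seq_interp1.
Qed.

Lemma fvalid_ctx X T T' C :
  fentails T T' -> fvalid (ffill X T') C -> fvalid (ffill X T) C.
Proof.
by move=> /(@fentails_ctx X) TT' HC t /TT' [t' tt' /HC]; apply: interp_rewrites.
Qed.

Lemma fentails_Over C B G : fvalid G B -> fentails (FF (Over C B) :: G) [:: FF C].
Proof.
move=> HB t [a [b [-> HCB /HB Hb]]].
by exists (a ++ b); [apply: rewrites_refl|apply/seq_interp1; apply: HCB].
Qed.

Lemma fentails_Under A C G : fvalid G A -> fentails (G ++ [:: FF (Under A C)]) [:: FF C].
Proof.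
move=> HA t /seq_interp_cat [a [b [-> /HA Ha /seq_interp1 HAC]]].
by exists (a ++ b); [apply: rewrites_refl|apply/seq_interp1; apply: HAC].
Qed.

Lemma fentails_Prod A B : fentails [:: FF (Prod A B)] [:: FF A; FF B].
Proof.
move=> t /seq_interp1 [a [b [Ha Hb tab]]].
by exists (a ++ b) => //; exists a, b; split=> //; apply/seq_interp1.
Qed.

Lemma fentails_BoxInv A : fentails [:: FB [:: FF (BoxInv A)]] [:: FF A].
Proof. by move=> t /seq_interp1 Ht; exists t; first exact: rewrites_refl. Qed.

Lemma fentails_Diam A : fentails [:: FF (Diam A)] [:: FB [:: FF A]].
Proof.
by move=> t /seq_interp1 Ht; exists t; [exact: rewrites_refl|apply/seq_interp1/seq_interp1].
Qed.

Lemma fentails_Bang A : fentails [:: FF (Bang A)] [:: FF A].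
Proof.
move=> t /seq_interp1 [HA t0]; exists t; first exact: rewrites_refl.
by apply/seq_interp1; apply: interp_rewrites t0 HA.
Qed.

Lemma fmeta_interp_Bang A t : fmeta_interp [:: FF (Bang A)] t ->
  rewrites t [::] /\ fmeta_interp [:: FF (Bang A)] [::].
Proof.
by move=> /seq_interp1 [HA t0]; split=> //; apply/seq_interp1; split=> //; apply: rewrites_refl.
Qed.

Lemma fentails_Bang_left A Phi :
  fentails (Phi ++ [:: FF (Bang A)]) ([:: FF (Bang A)] ++ Phi).
Proof.
move=> t /seq_interp_cat [a [b [-> Ha /fmeta_interp_Bang [b0 Hbang]]]]; exists a.
  by rewrite -[X in rewrites _ X]cats0; apply: rewrites_cat b0; apply: rewrites_refl.
by apply/seq_interp_cat; exists [::], a.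
Qed.

Lemma fentails_Bang_right A Phi :
  fentails ([:: FF (Bang A)] ++ Phi) (Phi ++ [:: FF (Bang A)]).
Proof.
move=> t /seq_interp_cat [a [b [-> /fmeta_interp_Bang [a0 Hbang] Hb]]]; exists b.
  exact: rewrites_cat a0 (rewrites_refl _ _).
by apply/seq_interp_cat; exists b, [::]; rewrite cats0.
Qed.

Lemma fentails_BangC A G1 G2 G3 :
  fentails (FF (Bang A) :: G1 ++ FB [:: FB G2] :: G3)
           (FF (Bang A) :: G1 ++ FB (FF (Bang A) :: G2) :: G3).
Proof.
move=> t [a [b [-> [HA a0] /seq_interp_cat [c [d [-> Hc [e [f [-> He Hf]]]]]]]]].
exists (a ++ c ++ e ++ f); first exact: rewrites_refl.
exists a, (c ++ e ++ f); split=> //; apply/seq_interp_cat; exists c, (e ++ f); split=> //.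
exists e, f; split=> //; move/seq_interp1: He => He.
by exists [::], e; split=> //; split=> //; apply: rewrites_refl.
Qed.

Lemma fentails_cut Pi A : fvalid Pi A -> fentails Pi [:: FF A].
Proof. by move=> HA t Ht; exists t; [exact: rewrites_refl|apply/seq_interp1/HA]. Qed.

Theorem Fder_sound G C : Fder G C -> fvalid G C.
Proof.
elim=> {G C}.
- by move=> A t /seq_interp1.
- move=> X G D1 D2 B C D _ HB _ HD.
  by apply: (fvalid_ctx (fentails_mid (fentails_Over HB))).
- move=> G B C _ _ HC t Ht x Hx; apply: HC.
  by apply/seq_interp_cat; exists t, x; split=> //; apply/seq_interp1.
- move=> X G D1 D2 A C D _ HA _ HD; rewrite -[G ++ _ :: D2]/(G ++ [:: _] ++ D2) (catA G).
  by apply: (fvalid_ctx (fentails_mid (fentails_Under HA))).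
- by move=> G A C _ _ HC t Ht x Hx; apply: HC; exists x, t.
- move=> X D1 D2 A B D _ HD.
  by apply: (fvalid_ctx (fentails_mid (@fentails_Prod A B))).
- move=> D G A B _ HA _ HB t /seq_interp_cat [a [b [-> /HA Ha /HB Hb]]].
  by exists a, b; split=> //; apply: rewrites_refl.
- move=> X D1 D2 A B _ HB.
  by apply: (fvalid_ctx (fentails_mid (@fentails_BoxInv A))).
- by move=> Xi A _ HA t Ht; apply: HA; apply/seq_interp1.
- move=> X D1 D2 A B _ HB.
  by apply: (fvalid_ctx (fentails_mid (@fentails_Diam A))).
- by move=> Xi A _ HA t /seq_interp1 /HA.
- move=> X D1 D2 A C _ HC.
  by apply: (fvalid_ctx (fentails_mid (@fentails_Bang A))).
- move=> X D1 D2 Phi A C _ HC.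
  rewrite -[Phi ++ _ :: D2]/(Phi ++ [:: _] ++ D2) (catA Phi).
  by apply: (fvalid_ctx (fentails_mid (@fentails_Bang_left A Phi))).
- move=> X D1 D2 Phi A C _.
  rewrite -[Phi ++ _ :: D2]/(Phi ++ [:: _] ++ D2) (catA Phi) => HC.
  by apply: (fvalid_ctx (fentails_mid (@fentails_Bang_right A Phi))).
- move=> A B _ HB t /seq_interp1 [HA t0]; split=> //.
  by apply/HB/seq_interp1; split=> //; apply: rewrites_refl.
- move=> X G1 G2 G3 A C _ _ HC.
  by apply: (fvalid_ctx (@fentails_BangC A G1 G2 G3)).
- move=> X Pi G1 G2 A C _ HA _ HC.
  by apply: (fvalid_ctx (fentails_mid (fentails_cut HA))).
Qed.

End FSoundness.

Section MSoundness.
Variable rs : seq (seq nat * seq nat).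
Local Notation rewrites := (rewrites rs).
Local Notation interp := (interp rs).

(* Stoup formulas are read as banged formulas. *)
Definition stoup_ok (z : stoup) := forall A, A \in z -> interp A [::].

Fixpoint sterm_interp (x : sterm) : seq nat -> Prop :=
  match x with
  | SF A => interp A
  | SB z G => fun t => stoup_ok z /\ seq_interp sterm_interp G t
  end.

Definition smeta_interp (X : smeta) (t : seq nat) :=
  stoup_ok X.1 /\ seq_interp sterm_interp X.2 t.

Definition mentails (X X' : smeta) :=
  forall t, smeta_interp X t -> exists2 t', rewrites t t' & smeta_interp X' t'.

Definition mvalid (X : smeta) (C : formula) := forall t, smeta_interp X t -> interp C t.

Lemma stoup_ok0 : stoup_ok mset0.
Proof. by move=> A; rewrite in_mset0. Qed.

Lemma stoup_okD z1 z2 : stoup_ok (z1 `+` z2) <-> stoup_ok z1 /\ stoup_ok z2.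
Proof.
split=> [H|[H1 H2] A]; first by split=> A HA; apply: H; rewrite in_msetD HA ?orbT.
by rewrite in_msetD => /orP[/H1|/H2].
Qed.

Lemma stoup_ok1 A : stoup_ok [mset A] <-> interp A [::].
Proof. by split=> [|HA B]; [apply; rewrite in_mset1|rewrite in_mset1 => /eqP ->]. Qed.

Lemma mentails_mid z z' D1 D2 T T' :
  mentails (z, T) (z', T') -> mentails (z, D1 ++ T ++ D2) (z', D1 ++ T' ++ D2).
Proof.
move=> TT' t [/= Hz /seq_interp_cat [a [b [-> Ha /seq_interp_cat [c [d [-> Hc Hd]]]]]]].
have [c' cc' [/= Hz' Hc']] := TT' c (conj Hz Hc).
exists (a ++ c' ++ d); first exact: rewrites_ctx.
split=> //; apply/seq_interp_cat; exists a, (c' ++ d); split=> //.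
by apply/seq_interp_cat; exists c', d.
Qed.

Lemma mentails_ctx X T T' : mentails T T' -> mentails (sfill X T) (sfill X T').
Proof.
move=> TT'; elim: X => //= z G1 X IH G2.
apply: (mentails_mid (T := [:: SBr _]) (T' := [:: SBr _])) => t [Hz /seq_interp1 /IH [t' tt' Ht']].
by exists t' => //; split=> //; apply/seq_interp1.
Qed.

Lemma mvalid_ctx X T T' C :
  mentails T T' -> mvalid (sfill X T') C -> mvalid (sfill X T) C.
Proof.
by move=> /(@mentails_ctx X) TT' HC t /TT' [t' tt' /HC]; apply: interp_rewrites.
Qed.

Lemma mentails_Over z1 z2 G B C :
  mvalid (z1, G) B -> mentails (z1 `+` z2, SF (Over C B) :: G) (z2, [:: SF C]).
Proof.
move=> HB t [/stoup_okD [Hz1 Hz2] [a [b [-> HCB Hb]]]].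
by exists (a ++ b); [apply: rewrites_refl|split=> //; apply/seq_interp1/HCB/HB].
Qed.

Lemma mentails_Under z1 z2 G A C :
  mvalid (z1, G) A -> mentails (z1 `+` z2, G ++ [:: SF (Under A C)]) (z2, [:: SF C]).
Proof.
move=> HA t [/stoup_okD [Hz1 Hz2] /seq_interp_cat [a [b [-> Ha /seq_interp1 HAC]]]].
by exists (a ++ b); [apply: rewrites_refl|split=> //; apply/seq_interp1/HAC/HA].
Qed.

Lemma mentails_Prod z A B : mentails (z, [:: SF (Prod A B)]) (z, [:: SF A; SF B]).
Proof.
move=> t [Hz /seq_interp1 [a [b [Ha Hb tab]]]].
by exists (a ++ b) => //; split=> //; exists a, b; split=> //; apply/seq_interp1.
Qed.

Lemma mentails_BoxInv z A : mentails (z, [:: SBr (sform (BoxInv A))]) (z, [:: SF A]).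
Proof. by move=> t [Hz /seq_interp1 [_ Ht]]; exists t; first exact: rewrites_refl. Qed.

Lemma mentails_Diam z A : mentails (z, [:: SF (Diam A)]) (z, [:: SBr (sform A)]).
Proof.
move=> t [Hz /seq_interp1 Ht]; exists t; first exact: rewrites_refl.
by split=> //; apply/seq_interp1; split; [exact: stoup_ok0|apply/seq_interp1].
Qed.

Lemma mentails_Bang z A : mentails (z, [:: SF (Bang A)]) (z `+` [mset A], [::]).
Proof.
move=> t [Hz /seq_interp1 [HA t0]]; exists [::] => //.
by split=> //; apply/stoup_okD; split=> //; apply/stoup_ok1.
Qed.

Lemma mentails_stoup z A : mentails (z `+` [mset A], [::]) (z, [:: SF A]).
Proof.
move=> t [/stoup_okD [Hz /stoup_ok1 HA] /= ->].
by exists [::]; [exact: rewrites_refl|split=> //; apply/seq_interp1].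
Qed.

Lemma mentails_BangC z z' A G :
  mentails (z `+` [mset A], [:: SBr (mset0, [:: SBr (z', G)])])
           (z `+` [mset A], [:: SBr (z' `+` [mset A], G)]).
Proof.
move=> t [Hz /seq_interp1 [_ /seq_interp1 [Hz' Ht]]].
exists t; first exact: rewrites_refl.
split=> //; apply/seq_interp1; split=> //.
by apply/stoup_okD; split=> //; case/stoup_okD: Hz.
Qed.

Theorem Mder_sound X C : Mder X C -> mvalid X C.
Proof.
elim=> {X C}.
- by move=> A t [_ /seq_interp1].
- move=> X z1 z2 G D1 D2 B C D _ HB _ HD.
  by apply: (mvalid_ctx (mentails_mid (mentails_Over HB))).
- move=> z G B C _ _ HC t [Hz Ht] x Hx; apply: HC; split=> //.
  by apply/seq_interp_cat; exists t, x; split=> //; apply/seq_interp1.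
- move=> X z1 z2 G D1 D2 A C D _ HA _ HD.
  rewrite -[G ++ _ :: D2]/(G ++ [:: _] ++ D2) (catA G).
  by apply: (mvalid_ctx (mentails_mid (mentails_Under HA))).
- by move=> z G A C _ _ HC t [Hz Ht] x Hx; apply: HC; split=> //; exists x, t.
- move=> X z D1 D2 A B D _ HD.
  by apply: (mvalid_ctx (mentails_mid (@mentails_Prod z A B))).
- move=> z1 z2 D G A B _ HA _ HB t [/stoup_okD [Hz1 Hz2] /seq_interp_cat [a [b [-> Ha Hb]]]].
  by exists a, b; split; [exact: HA|exact: HB|exact: rewrites_refl].
- move=> X z D1 D2 A B _ HB.
  by apply: (mvalid_ctx (mentails_mid (@mentails_BoxInv z A))).
- by move=> Xi A _ HA t Ht; apply: HA; split; [exact: stoup_ok0|apply/seq_interp1].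
- move=> X z D1 D2 A B _ HB.
  by apply: (mvalid_ctx (mentails_mid (@mentails_Diam z A))).
- by move=> Xi A _ HA t [_ /seq_interp1 /HA].
- move=> X z G1 G2 A B _ HB.
  by apply: (mvalid_ctx (mentails_mid (D1 := G1) (@mentails_Bang z A))).
- move=> X z G1 G2 A B _ HB.
  by apply: (mvalid_ctx (mentails_mid (D1 := G1) (@mentails_stoup z A))).
- by move=> A B _ HB t [/= Hz ->]; split; [exact: HB|exact: rewrites_refl].
- move=> X z z' G1 G2 G3 A B _ _ HB.
  by apply: (mvalid_ctx (mentails_mid (@mentails_BangC z z' A G2))).
Qed.

End MSoundness.

(** * Formulas encoding rewriting rules *)

(* [Rule x w y z b] is the rewriting rule [x w -> y z]; in derivations the
   head of the machine sits as a slot between [x] and [w], and reappears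
   between [y] and [z] iff [b]. *)
Record rule := Rule {
  lhs_pre : seq nat; lhs_post : seq nat;
  rhs_pre : seq nat; rhs_post : seq nat;
  keeps_slot : bool }.

Definition rule_tuple (r : rule) :=
  (lhs_pre r, lhs_post r, rhs_pre r, rhs_post r, keeps_slot r).
Definition tuple_rule (p : seq nat * seq nat * seq nat * seq nat * bool) :=
  let: (x, w, y, z, b) := p in Rule x w y z b.
Lemma rule_tupleK : cancel rule_tuple tuple_rule. Proof. by case. Qed.
HB.instance Definition _ := Equality.copy rule (can_type rule_tupleK).

Definition rule_pair (r : rule) := (lhs_pre r ++ lhs_post r, rhs_pre r ++ rhs_post r).

Definition wf_rule (r : rule) :=
  all (fun n => n != empty_var) (lhs_pre r ++ lhs_post r ++ rhs_pre r ++ rhs_post r) &&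
  (keeps_slot r || (rhs_pre r != [::])).

Fixpoint prods (A : formula) (l : seq formula) : formula :=
  if l is B :: l' then Prod A (prods B l') else A.

Definition word_formula (n : nat) (x : seq nat) := prods (Var n) (map Var x).

Definition slot := Diam (Diam Evar).

Definition rhs_formulas (r : rule) :=
  map Var (rhs_pre r) ++ (if keeps_slot r then [:: slot] else [::]) ++ map Var (rhs_post r).

Definition rhs_formula (r : rule) :=
  if rhs_formulas r is A :: l then prods A l else Evar.

Definition under_word (x : seq nat) (F : formula) :=
  if x is n :: x' then Under (word_formula n x') F else F.

Definition over_word (F : formula) (w : seq nat) :=
  if w is n :: w' then Over F (word_formula n w') else F.

Definition rule_formula (r : rule) :=
  under_word (lhs_pre r) (over_word (rhs_formula r) (lhs_post r)).

(* A banged copy of this formula is contracted into a slot [[E]]: it consumes [E] and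
   leaves [rule_formula r] inside the slot's outer bracket, where [[]^-1] opens it. *)
Definition rule_axiom (r : rule) := Over (BoxInv (rule_formula r)) Evar.

Lemma wf_rule_rhs r : wf_rule r -> rhs_formulas r != [::].
Proof. by case/andP=> _; rewrite /rhs_formulas; case: (rhs_pre r); case: (keeps_slot r). Qed.

Definition bang_axioms (Rs : seq rule) := map (fun r => Bang (rule_axiom r)) Rs.

(* The goal puts the initial configuration word [0 q w 1] around the input [w], with the
   head slot before [q], and asks for the accepting word [2].  The banged axioms are given
   back in the succedent since neither calculus has weakening. *)
Definition accept_formula (r0 : rule) (Rs : seq rule) :=
  Prod (prods (Bang (rule_axiom r0)) (bang_axioms Rs)) (Var 2).

Definition goal_formula (r0 : rule) (Rs : seq rule) (q : nat) :=
  Under (prods (Bang (rule_axiom r0)) (bang_axioms Rs ++ [:: Var 0; slot; Var q]))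
        (Over (accept_formula r0 Rs) (Var 1)).

Section Validity.
Variable rs : seq (seq nat * seq nat).
Local Notation rewrites := (rewrites rs).
Local Notation interp := (interp rs).

Lemma interp_prods A l t : seq_interp interp (A :: l) t -> interp (prods A l) t.
Proof.
elim: l A t => [|B l IH] A t /=; first by case=> a [b [-> Ha ->]]; rewrite cats0.
case=> a [b [-> Ha Hb]]; exists a, b; split=> //; last exact: rewrites_refl.
exact: IH.
Qed.

Lemma seq_interp_vars x : all (fun n => n != empty_var) x -> seq_interp interp (map Var x) x.
Proof.
elim: x => //= n x IH /andP [Hn Hx].
by exists [:: n], x; split=> //; [exact: interp_var|exact: IH].
Qed.

Lemma interp_word_formula n x t : all (fun k => k != empty_var) (n :: x) ->
  interp (word_formula n x) t -> rewrites t (n :: x).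
Proof.
elim: x n t => [|m x IH] n t /= /andP [/negbTE Hn Hx]; first by rewrite Hn.
case=> a [b [Ha Hb tab]]; apply: rewrites_trans tab _.
by apply: (rewrites_cat (a' := [:: n])); [rewrite /= Hn in Ha|exact: IH].
Qed.

Lemma interp_rhs_formula r : wf_rule r -> interp (rhs_formula r) (rhs_pre r ++ rhs_post r).
Proof.
move=> wf_r; have := wf_rule_rhs wf_r; rewrite /rhs_formula.
case E: (rhs_formulas r) => [|A l] // _; apply: interp_prods; rewrite -E.
case/andP: wf_r; rewrite !all_cat => /and4P [_ _ Hy Hz] _.
apply/seq_interp_cat; exists (rhs_pre r), (rhs_post r); split=> //; first exact: seq_interp_vars.
apply/seq_interp_cat; exists [::], (rhs_post r); split=> //; last exact: seq_interp_vars.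
by case: (keeps_slot r) => //=; exists [::], [::]; split=> //; exact: interp_Evar.
Qed.

Lemma interp_under_word x F t : all (fun n => n != empty_var) x ->
  (forall a, rewrites a x -> interp F (a ++ t)) -> interp (under_word x F) t.
Proof.
case: x => [|n x] /= Hx HF; first exact: (HF [::] (rewrites_refl _ _)).
by move=> a /(interp_word_formula Hx); apply: HF.
Qed.

Lemma interp_over_word F w t : all (fun n => n != empty_var) w ->
  (forall c, rewrites c w -> interp F (t ++ c)) -> interp (over_word F w) t.
Proof.
case: w => [|n w] /= Hw HF; first by rewrite -(cats0 t); exact: (HF [::] (rewrites_refl _ _)).
by move=> c /(interp_word_formula Hw); apply: HF.
Qed.

Lemma interp_rule_axiom r : wf_rule r -> rule_pair r \in rs -> interp (rule_axiom r) [::].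
Proof.
move=> wf_r r_rs; have /andP [all_r _] := wf_r.
rewrite !all_cat in all_r; case/and4P: all_r => Hx Hw _ _.
move=> e He /=; apply: interp_rewrites He _.
apply: interp_under_word => // a ax; apply: interp_over_word => // c cw; rewrite cats0.
apply: interp_rewrites (interp_rhs_formula wf_r).
exact: rewrites_trans (rewrites_cat ax cw) (rewrites_rule r_rs).
Qed.

Lemma interp_bang_prods A Rs t :
  interp (prods (Bang A) (bang_axioms Rs)) t -> rewrites t [::].
Proof.
elim: Rs A t => [|r Rs IH] A t /=; first by case.
by case=> a [b [[_ a0] /IH b0 tab]]; apply: rewrites_trans tab (rewrites_cat a0 b0).
Qed.

Lemma seq_interp_bang_axioms Rs : (forall r, r \in Rs -> interp (rule_axiom r) [::]) ->
  seq_interp interp (bang_axioms Rs) [::].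
Proof.
elim: Rs => //= r Rs IH U_ok; exists [::], [::]; split=> //.
  by split; [apply: U_ok; rewrite inE eqxx|exact: rewrites_refl].
by apply: IH => r' r'_Rs; apply: U_ok; rewrite inE r'_Rs orbT.
Qed.

Lemma interp_goal_formula r0 Rs q t :
  (forall r, r \in r0 :: Rs -> interp (rule_axiom r) [::]) -> q != empty_var ->
  interp (goal_formula r0 Rs q) t -> rewrites (0 :: q :: t ++ [:: 1]) [:: 2].
Proof.
move=> U_ok q_ne /(_ [:: 0; q]) H.
have /H /(_ [:: 1] (interp_var rs (isT : 1 != empty_var))) [a [b [Ha Hb ab]]] :
    interp (prods (Bang (rule_axiom r0)) (bang_axioms Rs ++ [:: Var 0; slot; Var q])) [:: 0; q].
  apply: interp_prods; exists [::], [:: 0; q]; split=> //.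
    by split; [apply: U_ok; rewrite inE eqxx|exact: rewrites_refl].
  apply/seq_interp_cat; exists [::], [:: 0; q]; split=> //.
    by apply: seq_interp_bang_axioms => r r_Rs; apply: U_ok; rewrite inE r_Rs orbT.
  exists [:: 0], [:: q]; split=> //; first exact: interp_var.
  exists [::], [:: q]; split=> //; first exact: interp_Evar.
  by exists [:: q], [::]; split=> //; exact: interp_var.
apply: rewrites_trans ab _; rewrite -[[:: 2]]cat0s.
exact: rewrites_cat (interp_bang_prods Ha) Hb.
Qed.

End Validity.

(** * Derivations simulating rewriting *)

Definition fvars (x : seq nat) := map (fun n => FF (Var n)) x.
Definition fslot := FB [:: FB [:: FF Evar]].
Definition rhs_fterms (r : rule) :=
  fvars (rhs_pre r) ++ (if keeps_slot r then [:: fslot] else [::]) ++ fvars (rhs_post r).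
Definition fbangs (Rs : seq rule) := map (fun r => FF (Bang (rule_axiom r))) Rs.

Lemma Fder_prods A l : Fder (map FF (A :: l)) (prods A l).
Proof.
elim: l A => [|B l IH] A /=; first exact: F_ax.
exact: (F_ProdR (D := [:: FF A]) (F_ax A) (IH B)).
Qed.

Lemma Fder_prodsL D1 D2 A l C :
  Fder (D1 ++ map FF (A :: l) ++ D2) C -> Fder (D1 ++ FF (prods A l) :: D2) C.
Proof.
elim: l A D1 => [|B l IH] A D1 //= H.
apply: (F_ProdL (X := FHole)) => /=.
by rewrite -cat_rcons; apply: IH; rewrite cat_rcons.
Qed.

Lemma Fder_slotL D1 D2 C : Fder (D1 ++ fslot :: D2) C -> Fder (D1 ++ FF slot :: D2) C.
Proof.
move=> H; apply: (F_DiamL (X := FHole)).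
exact: (F_DiamL (X := FIn D1 FHole D2) (D1 := [::])).
Qed.

Lemma Fder_rhs_formulaL r D1 D2 C : rhs_formulas r != [::] ->
  Fder (D1 ++ rhs_fterms r ++ D2) C -> Fder (D1 ++ FF (rhs_formula r) :: D2) C.
Proof.
rewrite /rhs_formula; case E: (rhs_formulas r) => [|A l] // _ H.
apply: Fder_prodsL; rewrite -E /rhs_formulas !map_cat -!map_comp.
move: H; rewrite /rhs_fterms; case: (keeps_slot r) => //=.
have catE S x U : D1 ++ (S ++ x :: U) ++ D2 = (D1 ++ S) ++ x :: (U ++ D2).
  by rewrite -!catA.
by rewrite !catE; apply: Fder_slotL.
Qed.

Lemma Fder_word_formula n x : Fder (fvars (n :: x)) (word_formula n x).
Proof. by have := Fder_prods (Var n) (map Var x); rewrite /= -map_comp. Qed.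

Lemma Fder_rule_formulaL r D1 D2 C : rhs_formulas r != [::] ->
  Fder (D1 ++ rhs_fterms r ++ D2) C ->
  Fder (D1 ++ fvars (lhs_pre r) ++ FF (rule_formula r) :: fvars (lhs_post r) ++ D2) C.
Proof.
move=> r_ne /(Fder_rhs_formulaL r_ne) H.
have {H} : Fder (D1 ++ FF (over_word (rhs_formula r) (lhs_post r)) :: fvars (lhs_post r) ++ D2) C.
  case: (lhs_post r) => [|n w] //=.
  exact: (F_OverL (X := FHole) (Fder_word_formula n w) H).
rewrite /rule_formula; case: (lhs_pre r) => [|n x] //= H.
exact: (F_UnderL (X := FHole) (Fder_word_formula n x) H).
Qed.

Lemma Fder_slot_contract r B1 B2 L D2 C :
  Fder (B1 ++ FF (Bang (rule_axiom r)) :: B2 ++ L ++ FF (rule_formula r) :: D2) C ->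
  Fder (B1 ++ FF (Bang (rule_axiom r)) :: B2 ++ L ++ fslot :: D2) C.
Proof.
set U := rule_axiom r; set L' := B1 ++ B2 ++ L => H.
apply: (F_BangP1 (X := FHole) (D1 := [::])) => /=.
have -> : B1 ++ B2 ++ L ++ fslot :: D2 = L' ++ fslot :: D2 by rewrite /L' -!catA.
apply: (F_BangC (X := FHole) (G1 := L') (G2 := [:: FF Evar])) => //=.
set X := FIn (FF (Bang U) :: L') FHole D2.
apply: (F_BangL (X := X) (D1 := [::])) => /=.
apply: (F_OverL (X := X) (D1 := [::]) (D2 := [::]) (F_ax Evar)) => /=.
apply: (@F_BoxInvL FHole (FF (Bang U) :: L') D2 (rule_formula r) C) => /=.
by rewrite /L' -!catA; apply: (F_BangP2 (X := FHole) (D1 := [::])).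
Qed.

Lemma Fder_rewrite_step (Rs : seq rule) r D1 D2 C : r \in Rs -> rhs_formulas r != [::] ->
  Fder (fbangs Rs ++ D1 ++ rhs_fterms r ++ D2) C ->
  Fder (fbangs Rs ++ D1 ++ fvars (lhs_pre r) ++ fslot :: fvars (lhs_post r) ++ D2) C.
Proof.
case/splitPr=> R1 R2 r_ne; rewrite catA => /(Fder_rule_formulaL r_ne).
have -> : fbangs (R1 ++ r :: R2) = fbangs R1 ++ FF (Bang (rule_axiom r)) :: fbangs R2.
  by rewrite /fbangs map_cat.
by rewrite -!catA /= !(catA D1); apply: Fder_slot_contract.
Qed.

Lemma Fder_accept r0 Rs : Fder (fbangs (r0 :: Rs) ++ [:: FF (Var 2)]) (accept_formula r0 Rs).
Proof.
apply: F_ProdR (F_ax _).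
by have := Fder_prods (Bang (rule_axiom r0)) (bang_axioms Rs); rewrite /= -map_comp.
Qed.

Lemma Fder_goal r0 Rs q G : G <> [::] ->
  Fder (fbangs (r0 :: Rs) ++ [:: FF (Var 0); fslot; FF (Var q)] ++ G ++ [:: FF (Var 1)])
       (accept_formula r0 Rs) ->
  Fder G (goal_formula r0 Rs q).
Proof.
move=> G_ne; set B := fbangs (r0 :: Rs); set G' := G ++ [:: FF (Var 1)].
have catE x :
    B ++ [:: FF (Var 0); x; FF (Var q)] ++ G' = (B ++ [:: FF (Var 0)]) ++ x :: FF (Var q) :: G'.
  by rewrite -!catA.
rewrite catE => H; apply: F_UnderR => //; apply: F_OverR => //.
apply: (Fder_prodsL (D1 := [::])); rewrite cat0s.
have -> : map FF (Bang (rule_axiom r0) :: bang_axioms Rs ++ [:: Var 0; slot; Var q]) =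
          B ++ [:: FF (Var 0); FF slot; FF (Var q)] by rewrite /= map_cat -map_comp.
by rewrite -catA catE; apply: Fder_slotL.
Qed.

Definition mvars (x : seq nat) := map (fun n => SF (Var n)) x.
Definition mslot := SBr (mset0, [:: SBr (sform Evar)]).
Definition rhs_sterms (r : rule) :=
  mvars (rhs_pre r) ++ (if keeps_slot r then [:: mslot] else [::]) ++ mvars (rhs_post r).
Definition mbangs (Rs : seq rule) := map (fun r => SF (Bang (rule_axiom r))) Rs.
Definition axiom_stoup (Rs : seq rule) : stoup :=
  foldr (fun r z => [mset rule_axiom r] `+` z) mset0 Rs.

Lemma Mder_prods A l : Mder (mset0, map SF (A :: l)) (prods A l).
Proof.
elim: l A => [|B l IH] A /=; first exact: M_ax.
by have := M_ProdR (D := [:: SF A]) (M_ax A) (IH B); rewrite mset0D.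
Qed.

Lemma Mder_prodsL z D1 D2 A l C :
  Mder (z, D1 ++ map SF (A :: l) ++ D2) C -> Mder (z, D1 ++ SF (prods A l) :: D2) C.
Proof.
elim: l A D1 => [|B l IH] A D1 //= H.
apply: (M_ProdL (X := SHole)) => /=.
by rewrite -cat_rcons; apply: IH; rewrite cat_rcons.
Qed.

Lemma Mder_slotL z D1 D2 C : Mder (z, D1 ++ mslot :: D2) C -> Mder (z, D1 ++ SF slot :: D2) C.
Proof.
move=> H; apply: (M_DiamL (X := SHole)).
exact: (M_DiamL (X := SIn z D1 SHole D2) (z := mset0) (D1 := [::])).
Qed.

Lemma Mder_rhs_formulaL r z D1 D2 C : rhs_formulas r != [::] ->
  Mder (z, D1 ++ rhs_sterms r ++ D2) C -> Mder (z, D1 ++ SF (rhs_formula r) :: D2) C.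
Proof.
rewrite /rhs_formula; case E: (rhs_formulas r) => [|A l] // _ H.
apply: Mder_prodsL; rewrite -E /rhs_formulas !map_cat -!map_comp.
move: H; rewrite /rhs_sterms; case: (keeps_slot r) => //=.
have catE S x U : D1 ++ (S ++ x :: U) ++ D2 = (D1 ++ S) ++ x :: (U ++ D2).
  by rewrite -!catA.
by rewrite !catE; apply: Mder_slotL.
Qed.

Lemma Mder_word_formula n x : Mder (mset0, mvars (n :: x)) (word_formula n x).
Proof. by have := Mder_prods (Var n) (map Var x); rewrite /= -map_comp. Qed.

Lemma Mder_rule_formulaL r z D1 D2 C : rhs_formulas r != [::] ->
  Mder (z, D1 ++ rhs_sterms r ++ D2) C ->
  Mder (z, D1 ++ mvars (lhs_pre r) ++ SF (rule_formula r) :: mvars (lhs_post r) ++ D2) C.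
Proof.
move=> r_ne /(Mder_rhs_formulaL r_ne) H.
have {H} :
    Mder (z, D1 ++ SF (over_word (rhs_formula r) (lhs_post r)) :: mvars (lhs_post r) ++ D2) C.
  case: (lhs_post r) => [|n w] //=.
  by have := M_OverL (X := SHole) (Mder_word_formula n w) H; rewrite mset0D.
rewrite /rule_formula; case: (lhs_pre r) => [|n x] //= H.
by have := M_UnderL (X := SHole) (Mder_word_formula n x) H; rewrite mset0D.
Qed.

Lemma Mder_slot_contract r z L D2 C :
  Mder (z `+` [mset rule_axiom r], L ++ SF (rule_formula r) :: D2) C ->
  Mder (z `+` [mset rule_axiom r], L ++ mslot :: D2) C.
Proof.
set U := rule_axiom r => H.
apply: (M_BangC' (X := SHole) (z' := mset0) (G2 := [:: SF Evar])); first by left.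
set X := SIn (z `+` [mset U]) L SHole D2.
apply: (M_BangP (X := X) (z := mset0) (G1 := [::])) => /=.
have := M_OverL (X := X) (z1 := mset0) (z2 := mset0) (D1 := [::]) (D2 := [::])
          (C := BoxInv (rule_formula r)) (M_ax Evar).
rewrite mset0D /=; apply.
exact: (M_BoxInvL (X := SHole)).
Qed.

Lemma axiom_stoup_split (Rs : seq rule) r :
  r \in Rs -> exists z, axiom_stoup Rs = z `+` [mset rule_axiom r].
Proof.
elim: Rs => //= r1 Rs IH; rewrite in_cons => /predU1P [<-|/IH [z ->]].
  by exists (axiom_stoup Rs); rewrite msetDC.
by exists ([mset rule_axiom r1] `+` z); rewrite msetDA.
Qed.

Lemma Mder_rewrite_step (Rs : seq rule) r D1 D2 C : r \in Rs -> rhs_formulas r != [::] ->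
  Mder (axiom_stoup Rs, D1 ++ rhs_sterms r ++ D2) C ->
  Mder (axiom_stoup Rs, D1 ++ mvars (lhs_pre r) ++ mslot :: mvars (lhs_post r) ++ D2) C.
Proof.
move=> /axiom_stoup_split [z ->] r_ne /(Mder_rule_formulaL r_ne).
by rewrite !(catA D1); apply: Mder_slot_contract.
Qed.

Lemma Mder_bang A : Mder ([mset A], [::]) (Bang A).
Proof.
apply: M_BangR'.
by have := M_BangP (X := SHole) (z := mset0) (G1 := [::]) (M_ax A); rewrite mset0D.
Qed.

Lemma Mder_accept r0 Rs : Mder (axiom_stoup (r0 :: Rs), [:: SF (Var 2)]) (accept_formula r0 Rs).
Proof.
rewrite -[axiom_stoup _]msetD0; apply: (M_ProdR (D := [::])) (M_ax _).
elim: Rs r0 => [|r1 Rs IH] r0 /=; first by rewrite msetD0; apply: Mder_bang.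
exact: (M_ProdR (D := [::]) (Mder_bang _) (IH r1)).
Qed.

Lemma Mder_bangsL z Rs D C :
  Mder (z `+` axiom_stoup Rs, D) C ->
  Mder (z, mbangs Rs ++ D) C.
Proof.
elim: Rs z => [|r Rs IH] z /=; first by rewrite msetD0.
move=> H; apply: (M_BangL (X := SHole) (G1 := [::])) => /=.
by apply: IH; rewrite -msetDA.
Qed.

Lemma Mder_goal r0 Rs q G : G <> [::] ->
  Mder (axiom_stoup (r0 :: Rs), [:: SF (Var 0); mslot; SF (Var q)] ++ G ++ [:: SF (Var 1)])
       (accept_formula r0 Rs) ->
  Mder (mset0, G) (goal_formula r0 Rs q).
Proof.
move=> G_ne H; apply: M_UnderR; first by left.
apply: M_OverR; first by left.
apply: (Mder_prodsL (D1 := [::])); rewrite cat0s.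
have -> : map SF (Bang (rule_axiom r0) :: bang_axioms Rs ++ [:: Var 0; slot; Var q]) =
    mbangs (r0 :: Rs) ++ [:: SF (Var 0); SF slot; SF (Var q)].
  by rewrite /= map_cat -map_comp.
rewrite -catA; apply: Mder_bangsL; rewrite mset0D.
by apply: (Mder_slotL (D1 := [:: _])).
Qed.

(** * Turing machines as rewriting systems *)

Lemma cat_cons_marked (T : Type) (P : pred T) s1 x s2 t1 y t2 :
  s1 ++ x :: s2 = t1 ++ y :: t2 -> P x -> P y -> ~~ has P t1 -> ~~ has P t2 ->
  [/\ s1 = t1, x = y & s2 = t2].
Proof.
elim: s1 t1 => [|a s1 IH] [|b t1] /=.
- by case=> -> ->.
- by case=> -> _ Px _; rewrite Px.
- by case=> _ E Px _ _; rewrite -E has_cat /= Px orbT.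
- by case=> -> /IH H Px Py /norP [_ H1] H2; case: (H Px Py H1 H2) => -> -> ->.
Qed.

Section MachineRules.
Variables (Q Gam : finType) (blank : Gam)
          (delta : Q -> Gam -> option (Q * Gam * bool)) (qacc : Q).

(* Tape symbols get even codes [>= 4] and states odd codes [>= 5]; [0] and [1]
   mark the ends of the tape, [2] is the accepting word, and [3] is [empty_var]. *)
Definition sym_code (g : Gam) := 4 + (pickle g).*2.
Definition state_code (q : Q) := 5 + (pickle q).*2.

Lemma sym_code_inj : injective sym_code.
Proof. by move=> a b /addnI /(can_inj doubleK) /(pcan_inj pickleK). Qed.

Lemma state_code_inj : injective state_code.
Proof. by move=> a b /addnI /(can_inj doubleK) /(pcan_inj pickleK). Qed.

Definition is_state_code (n : nat) := odd n && (4 < n).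

Lemma is_state_code_state q : is_state_code (state_code q).
Proof. by rewrite /is_state_code /state_code oddD odd_double. Qed.

Lemma is_state_code_sym g : is_state_code (sym_code g) = false.
Proof. by rewrite /is_state_code /sym_code oddD odd_double. Qed.

Lemma state_code_neq_empty q : state_code q != empty_var.
Proof. by rewrite /state_code; case: (pickle q). Qed.

Definition tape_left (c : tm_config Q Gam) := 0 :: rev (map sym_code c.1.2).
Definition tape_right (c : tm_config Q Gam) := state_code c.1.1 :: map sym_code c.2 ++ [:: 1].

Lemma tape_left_cons q g l r : tape_left (q, g :: l, r) = tape_left (q, l, r) ++ [:: sym_code g].
Proof. by rewrite /tape_left /= rev_cons cats1. Qed.

Definition trans_rules (q : Q) (a : Gam) : seq rule :=
  let sq := state_code q in let sa := sym_code a in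
  match delta q a with
  | Some (q', b, true) =>
      Rule [::] [:: sq; sa] [:: sym_code b] [:: state_code q'] true ::
      (if a == blank then
         [:: Rule [::] [:: sq; 1] [:: sym_code b] [:: state_code q'; 1] true]
       else [::])
  | Some (q', b, false) =>
      [seq Rule [:: sym_code c] [:: sq; sa] [::] [:: state_code q'; sym_code c; sym_code b] true
      | c <- enum Gam] ++
      Rule [:: 0] [:: sq; sa] [:: 0] [:: state_code q'; sym_code blank; sym_code b] true ::
      (if a == blank then
         [seq Rule [:: sym_code c] [:: sq; 1] [::]
                   [:: state_code q'; sym_code c; sym_code b; 1] true | c <- enum Gam] ++
         [:: Rule [:: 0] [:: sq; 1] [:: 0]
                  [:: state_code q'; sym_code blank; sym_code b; 1] true]
       else [::])
  | None => [::]
  end.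

Definition erase_rules : seq rule :=
  [seq Rule [:: sym_code c] [:: state_code qacc] [::] [:: state_code qacc] true | c <- enum Gam] ++
  [seq Rule [::] [:: state_code qacc; sym_code a] [::] [:: state_code qacc] true | a <- enum Gam].

Definition final_rule := Rule [:: 0] [:: state_code qacc; 1] [:: 2] [::] false.

Definition step_rules : seq rule :=
  erase_rules ++ flatten [seq trans_rules q a | q <- enum Q, a <- enum Gam].

Definition tm_rules := final_rule :: step_rules.

Lemma mem_trans_rules q a r : r \in trans_rules q a -> r \in tm_rules.
Proof.
move=> r_qa; rewrite inE mem_cat; apply/orP; right; apply/orP; right.
apply/flattenP; exists (trans_rules q a) => //.
by apply/allpairsP; exists (q, a); rewrite !mem_enum.
Qed.

Lemma mem_erase_rules r : r \in erase_rules -> r \in tm_rules.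
Proof. by move=> r_e; rewrite inE mem_cat r_e orbT. Qed.

Lemma wf_tm_rules r : r \in tm_rules -> wf_rule r.
Proof.
rewrite inE mem_cat => /or3P [/eqP ->|r_e|/flattenP [s /allpairsP [[q a] [_ _ ->]]]] //.
  by move: r_e; rewrite mem_cat => /orP [|] /mapP [c _ ->].
rewrite /trans_rules; case: (delta q a) => [[[q' b] []]|] //.
  by rewrite inE => /predU1P [->|]; [|case: eqP => // _; rewrite inE => /eqP ->].
rewrite mem_cat inE; case/or3P=> [/mapP [c _ ->]|/eqP ->|] //.
by case: eqP => // _; rewrite mem_cat inE; case/orP=> [/mapP [c _ ->]|/eqP ->].
Qed.

(* [D L R] stands for the derivability of the sequent encoding [L], the head slot and [R]. *)
Section Simulation.
Variable D : seq nat -> seq nat -> Prop.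
Hypothesis D_step : forall r P S, r \in tm_rules -> keeps_slot r ->
  D (P ++ rhs_pre r) (rhs_post r ++ S) -> D (P ++ lhs_pre r) (lhs_post r ++ S).
Hypothesis D_final : D [:: 0] [:: state_code qacc; 1].

Lemma D_accepting l r : D (tape_left (qacc, l, r)) (tape_right (qacc, l, r)).
Proof.
elim: l => [|g l IHl].
  elim: r => [|a r IHr] //.
  have Hin : Rule [::] [:: state_code qacc; sym_code a] [::] [:: state_code qacc] true \in tm_rules.
    by apply: mem_erase_rules; rewrite mem_cat; apply/orP; right; apply: map_f; rewrite mem_enum.
  exact: (D_step (P := [:: 0]) (S := map sym_code r ++ [:: 1]) Hin).
have Hin : Rule [:: sym_code g] [:: state_code qacc] [::] [:: state_code qacc] true \in tm_rules.
  by apply: mem_erase_rules; rewrite mem_cat; apply/orP; left; apply: map_f; rewrite mem_enum.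
rewrite tape_left_cons.
by apply: (D_step (S := map sym_code r ++ [:: 1]) Hin); rewrite // cats0.
Qed.

Lemma D_tm_step c c' : tm_step blank delta c = Some c' ->
  D (tape_left c') (tape_right c') -> D (tape_left c) (tape_right c).
Proof.
have step r P S L R L' R' : r \in tm_rules -> keeps_slot r ->
    L = P ++ lhs_pre r -> R = lhs_post r ++ S ->
    L' = P ++ rhs_pre r -> R' = rhs_post r ++ S -> D L' R' -> D L R.
  by move=> r_tm r_slot -> -> -> ->; apply: D_step.
case: c => [[q l] r] /=; set a := head blank r.
have mem := @mem_trans_rules q a; rewrite /trans_rules in mem.
case Ed: (delta q a) mem => [[[q' b] []]|] // mem [<-].
  case: r @a Ed mem => [|a0 r] /= _ mem.
    apply: (step (Rule [::] [:: state_code q; 1] [:: sym_code b] [:: state_code q'; 1] true)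
                 _ [::]); rewrite ?tape_left_cons ?cats0 //.
    by apply: mem; rewrite eqxx !inE eqxx orbT.
  apply: (step (Rule [::] [:: state_code q; sym_code a0] [:: sym_code b] [:: state_code q'] true)
               _ (map sym_code r ++ [:: 1])); rewrite ?tape_left_cons ?cats0 //.
  by apply: mem; rewrite inE eqxx.
case: r @a Ed mem => [|a0 r] /= _ mem; case: l => [|g l] /=.
- apply: (step (Rule [:: 0] [:: state_code q; 1] [:: 0]
                 [:: state_code q'; sym_code blank; sym_code b; 1] true) [::] [::]) => //.
  by apply: mem; rewrite eqxx !(mem_cat, inE) eqxx !orbT.
- apply: (step (Rule [:: sym_code g] [:: state_code q; 1] [::]
                 [:: state_code q'; sym_code g; sym_code b; 1] true) _ [::]).
  all: rewrite ?tape_left_cons ?cats0 //.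
  by apply: mem; rewrite eqxx !(mem_cat, inE) map_f ?mem_enum ?orbT.
- apply: (step (Rule [:: 0] [:: state_code q; sym_code a0] [:: 0]
                 [:: state_code q'; sym_code blank; sym_code b] true) [::]) => //.
  by apply: mem; rewrite !(mem_cat, inE) eqxx !orbT.
- apply: (step (Rule [:: sym_code g] [:: state_code q; sym_code a0] [::]
                 [:: state_code q'; sym_code g; sym_code b] true)).
  all: rewrite ?tape_left_cons ?cats0 //.
  by apply: mem; rewrite mem_cat map_f ?mem_enum.
Qed.

Lemma D_tm_run n c l r : tm_run blank delta n c = Some (qacc, l, r) ->
  D (tape_left c) (tape_right c).
Proof.
elim: n c => [|n IH] c /=; first by case=> ->; apply: D_accepting.
by case E: (tm_step blank delta c) => [c'|] //= /IH; apply: D_tm_step.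
Qed.
End Simulation.

Definition conf_word (c : tm_config Q Gam) := tape_left c ++ tape_right c.

Lemma conf_word_split c u v x q w :
  conf_word c = u ++ (x ++ state_code q :: w) ++ v ->
  [/\ u ++ x = tape_left c, q = c.1.1 & w ++ v = map sym_code c.2 ++ [:: 1]].
Proof.
move=> E; have {}E : tape_left c ++ state_code c.1.1 :: (map sym_code c.2 ++ [:: 1]) =
                    (u ++ x) ++ state_code q :: (w ++ v) by move: E; rewrite -!catA; apply.
have noq s : ~~ has is_state_code (map sym_code s).
  by apply/hasPn => _ /mapP [g _ ->]; rewrite is_state_code_sym.
have noL : ~~ has is_state_code (tape_left c) by rewrite /= has_rev (negbTE (noq _)).
have noR : ~~ has is_state_code (map sym_code c.2 ++ [:: 1]) by rewrite has_cat (negbTE (noq _)).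
by case: (cat_cons_marked (esym E) (is_state_code_state _) (is_state_code_state _) noL noR)
   => -> /state_code_inj -> ->.
Qed.

Lemma tape_left_sym q l r u g : u ++ [:: sym_code g] = tape_left (q, l, r) ->
  exists l', l = g :: l' /\ u = tape_left (q, l', r).
Proof.
case: l => [|g' l] /=.
  by case: u => [|x [|]] // [].
rewrite tape_left_cons => /eqP; rewrite !cats1 eqseq_rcons => /andP [/eqP -> /eqP /sym_code_inj ->].
by exists l.
Qed.

Lemma tape_left_0 q l r u : u ++ [:: 0] = tape_left (q, l, r) -> l = [::] /\ u = [::].
Proof.
case: l => [|g l]; first by case: u => [|x [|]] // [].
by rewrite tape_left_cons => /eqP; rewrite !cats1 eqseq_rcons => /andP [_].
Qed.

Lemma tape_right_sym a r v : sym_code a :: v = map sym_code r ++ [:: 1] ->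
  exists r', r = a :: r' /\ v = map sym_code r' ++ [:: 1].
Proof.
case: r => [[]|a' r E] //; exists r.
by move: (congr1 (head 0) E) (congr1 behead E) => /= /sym_code_inj -> ->.
Qed.

Lemma tape_right_end r v : 1 :: v = map sym_code r ++ [:: 1] -> r = [::] /\ v = [::].
Proof. by case: r => [[]|]. Qed.

Lemma trans_rules_step q a r c u v : r \in trans_rules q a ->
  conf_word c = u ++ (lhs_pre r ++ lhs_post r) ++ v ->
  exists2 c', tm_step blank delta c = Some c' & u ++ (rhs_pre r ++ rhs_post r) ++ v = conf_word c'.
Proof.
case: c => [[q0 l] t]; rewrite /trans_rules /conf_word.
case Ed: (delta q a) => [[[q' b] []]|] //.
  rewrite inE => /predU1P [-> /conf_word_split /= [Hu <- /tape_right_sym [t' [-> ->]]]|].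
    exists (q', b :: l, t'); first by rewrite /= Ed.
    by move: Hu; rewrite cats0 => ->; rewrite /= rev_cons -cats1 -!catA.
  case: eqP => // Ea; rewrite inE => /eqP -> /conf_word_split /= [Hu <- /tape_right_end [-> ->]].
  exists (q', b :: l, [::]); first by rewrite /= -Ea Ed.
  by move: Hu; rewrite cats0 => ->; rewrite /= rev_cons -cats1 -!catA.
rewrite mem_cat inE => /or3P [/mapP [g _ ->]|/eqP ->|].
- move=> /conf_word_split /= [/tape_left_sym [l' [-> ->]] <- /tape_right_sym [t' [-> ->]]].
  by exists (q', l', g :: b :: t'); rewrite /= ?Ed.
- move=> /conf_word_split /= [/tape_left_0 [-> ->] <- /tape_right_sym [t' [-> ->]]].
  by exists (q', [::], blank :: b :: t'); rewrite /= ?Ed.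
case: eqP => // Ea; rewrite mem_cat inE => /orP [/mapP [g _ ->]|/eqP ->].
- move=> /conf_word_split /= [/tape_left_sym [l' [-> ->]] <- /tape_right_end [-> ->]].
  by exists (q', l', [:: g; b]); rewrite /= -?Ea ?Ed.
- move=> /conf_word_split /= [/tape_left_0 [-> ->] <- /tape_right_end [-> ->]].
  by exists (q', [::], [:: blank; b]); rewrite /= -?Ea ?Ed.
Qed.

Lemma tm_rules_step r c u v : r \in tm_rules ->
  conf_word c = u ++ (lhs_pre r ++ lhs_post r) ++ v ->
  c.1.1 = qacc \/
  exists2 c', tm_step blank delta c = Some c' & u ++ (rhs_pre r ++ rhs_post r) ++ v = conf_word c'.
Proof.
rewrite inE mem_cat => /or3P [/eqP ->|r_e|/flattenP [s /allpairsP [[q a] [_ _ ->]]]].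
- by move=> /(@conf_word_split _ _ _ [:: 0] _ [:: 1]) [_ <-]; left.
- by move: r_e; rewrite mem_cat => /orP [|] /mapP [g _ ->] /conf_word_split [_ <-]; left.
- by move=> r_qa /(trans_rules_step r_qa); right.
Qed.

Definition accepts (c : tm_config Q Gam) :=
  exists n l r, tm_run blank delta n c = Some (qacc, l, r).

Lemma accepts_step c c' : tm_step blank delta c = Some c' -> accepts c' -> accepts c.
Proof. by move=> cc' [n [l [r Hn]]]; exists n.+1, l, r; rewrite /= cc'. Qed.

Lemma rewrites_accepts c :
  rewrites (map rule_pair tm_rules) (conf_word c) [:: 2] -> accepts c.
Proof.
move E: (conf_word c) => s; move E2: [:: 2] => t H.
elim: H c E {E2}(E2) => [s0|u l r v s0 lr _ IH] c Ec t2.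
  by rewrite -t2 in Ec; case: c Ec => [[q l] r].
case/mapP: lr => p p_tm [El Er]; rewrite El Er in Ec IH.
case: (tm_rules_step p_tm Ec) => [accepting|[c' cc' Ec']].
  by exists 0; case: c accepting {Ec} => [[q l'] r'] /= ->; exists l', r'.
exact: accepts_step cc' (IH c' (esym Ec') t2).
Qed.
End MachineRules.

(** * The grammar of a Turing machine *)

Definition is_letter (A : formula) := if A is Var n then n != empty_var else false.
Definition var_word (As : seq formula) :=
  flatten [seq if A is Var n then [:: n] else [::] | A <- As].

Lemma var_word_cat As Bs : var_word (As ++ Bs) = var_word As ++ var_word Bs.
Proof. by rewrite /var_word map_cat flatten_cat. Qed.

Section Leaves.
Variable rs : seq (seq nat * seq nat).

Fixpoint fterm_interp_leaves (x : fterm) :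
  all is_letter (fterm_leaves x) -> fterm_interp rs x (var_word (fterm_leaves x)).
Proof.
case: x => [[n||||||]|G] //=; first by rewrite andbT; apply: interp_var.
elim: G => //= x G IH; rewrite all_cat var_word_cat => /andP [Hx HG].
exists (var_word (fterm_leaves x)), (var_word (fmeta_leaves G)).
by split; [|exact: fterm_interp_leaves|exact: IH].
Qed.

Fixpoint sterm_interp_leaves (x : sterm) : sterm_empty x ->
  all is_letter (sterm_leaves x) -> sterm_interp rs x (var_word (sterm_leaves x)).
Proof.
case: x => [[n||||||]|z G] //=; first by rewrite andbT => _; apply: interp_var.
case/andP=> /eqP -> HG HL; split; first exact: stoup_ok0.
elim: G HG HL => //= x G IH; rewrite all_cat var_word_cat => /andP [Ex EG] /andP [Hx HG].
exists (var_word (sterm_leaves x)), (var_word (flatten (map sterm_leaves G))).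
by split; [|exact: sterm_interp_leaves|exact: IH].
Qed.

End Leaves.

Lemma s_rec_t_rec_M (Sigma : finType) (G : grammar Sigma) w : s_rec_M G w -> t_rec_M G w.
Proof.
case=> As [wAs HAs]; exists As, (mset0, map SF As); split=> //; split.
  by rewrite /smeta_empty eqxx; elim: As {wAs HAs}.
by split=> //; rewrite /smeta_leaves; elim: As {wAs HAs} => //= A As ->.
Qed.

Lemma s_rec_t_rec_F (Sigma : finType) (G : grammar Sigma) w : s_rec_F G w -> t_rec_F G w.
Proof.
case=> As [wAs HAs]; exists As, (map FF As); split=> //; split=> //.
by rewrite /fmeta_leaves; elim: As {wAs HAs} => //= A As ->.
Qed.

Section MachineGrammar.
Variables (Q Gam : finType) (blank : Gam)
          (delta : Q -> Gam -> option (Q * Gam * bool)) (q0 qacc : Q)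
          (Sigma : finType) (inp : Sigma -> Gam).

Local Notation sym_code := (@sym_code Gam).
Local Notation final_rule := (final_rule qacc).
Local Notation step_rules := (step_rules blank delta qacc).
Local Notation tm_rules := (tm_rules blank delta qacc).
Local Notation rs := (map rule_pair tm_rules).
Local Notation accept := (accept_formula final_rule step_rules).
Local Notation accepts := (accepts blank delta qacc).

Definition input_formulas (w : seq Sigma) := [seq Var (sym_code (inp a)) | a <- w].
Definition input_conf (w : seq Sigma) : tm_config Q Gam := (q0, [::], map inp w).

Definition tm_grammar := Grammar [seq (a, Var (sym_code (inp a))) | a <- enum Sigma]
                                 (goal_formula final_rule step_rules (state_code q0)).

Lemma assigns_tm_grammar w As : assigns tm_grammar w As -> As = input_formulas w.
Proof.
elim: w As => [|a w IH] [|A As] //= [] // [size_As] /andP [/mapP [a' _ [<- ->]] HAs].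
by rewrite (IH As).
Qed.

Lemma assigns_input_formulas w : assigns tm_grammar w (input_formulas w).
Proof.
split; first by rewrite size_map.
by elim: w => //= a w ->; rewrite andbT; apply: map_f; rewrite mem_enum.
Qed.

Lemma var_word_input w : var_word (input_formulas w) = map sym_code (map inp w).
Proof. by elim: w => //= a w IH; rewrite -IH. Qed.

Lemma interp_goal_accepts w :
  interp rs (target tm_grammar) (var_word (input_formulas w)) -> accepts (input_conf w).
Proof.
have U_ok r : r \in tm_rules -> interp rs (rule_axiom r) [::].
  by move=> r_tm; apply: interp_rule_axiom (wf_tm_rules r_tm) (map_f _ r_tm).
move=> /(interp_goal_formula U_ok (state_code_neq_empty q0)).
by rewrite var_word_input; apply: (rewrites_accepts (c := input_conf w)).
Qed.

Lemma all_letters_input w : all is_letter (input_formulas w).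
Proof. by elim: w. Qed.

Lemma t_rec_F_accepts w : t_rec_F tm_grammar w -> accepts (input_conf w).
Proof.
case=> As [Pi [/assigns_tm_grammar -> [leaves_Pi /Fder_sound HPi]]].
apply/interp_goal_accepts/HPi; rewrite -leaves_Pi.
apply: (@fterm_interp_leaves _ (FB Pi)).
by rewrite -[fterm_leaves _]/(fmeta_leaves Pi) leaves_Pi all_letters_input.
Qed.

Lemma t_rec_M_accepts w : t_rec_M tm_grammar w -> accepts (input_conf w).
Proof.
case=> As [[z Pi] [/assigns_tm_grammar -> [/andP [/= /eqP -> empty_Pi]]]].
move=> [leaves_Pi /Mder_sound HPi]; apply/interp_goal_accepts/HPi; rewrite -leaves_Pi.
apply: (@sterm_interp_leaves _ (SB mset0 Pi)); first by rewrite /= eqxx.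
by rewrite -[sterm_leaves _]/(smeta_leaves (mset0, Pi)) leaves_Pi all_letters_input.
Qed.

Lemma input_fterms w : map FF (input_formulas w) = fvars (map sym_code (map inp w)).
Proof. by elim: w => //= a w ->. Qed.

Lemma accepts_Fder w : w <> [::] -> accepts (input_conf w) ->
  Fder (map FF (input_formulas w)) (target tm_grammar).
Proof.
move=> w_ne [n [l [t Hn]]].
pose D L R := Fder (fbangs tm_rules ++ fvars L ++ fslot :: fvars R) accept.
have D_step r P S : r \in tm_rules -> keeps_slot r ->
    D (P ++ rhs_pre r) (rhs_post r ++ S) -> D (P ++ lhs_pre r) (lhs_post r ++ S).
  move=> r_tm r_slot; rewrite /D /fvars !map_cat -!catA => H.
  apply: (Fder_rewrite_step r_tm (wf_rule_rhs (wf_tm_rules r_tm))).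
  by rewrite /rhs_fterms r_slot -!catA.
have D_final : D [:: 0] [:: state_code qacc; 1].
  have := Fder_rewrite_step (D1 := [::]) (D2 := [::]) (mem_head final_rule step_rules) isT.
  by rewrite /rhs_fterms /=; apply; apply: Fder_accept.
have := D_tm_run D_step D_final Hn; rewrite /D /= => H.
apply: Fder_goal; first by case: w {Hn H} w_ne.
by rewrite input_fterms; move: H; rewrite /fvars map_cat.
Qed.

Lemma input_sterms w : map SF (input_formulas w) = mvars (map sym_code (map inp w)).
Proof. by elim: w => //= a w ->. Qed.

Lemma accepts_Mder w : w <> [::] -> accepts (input_conf w) ->
  Mder (mset0, map SF (input_formulas w)) (target tm_grammar).
Proof.
move=> w_ne [n [l [t Hn]]].
pose D L R := Mder (axiom_stoup tm_rules, mvars L ++ mslot :: mvars R) accept.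
have D_step r P S : r \in tm_rules -> keeps_slot r ->
    D (P ++ rhs_pre r) (rhs_post r ++ S) -> D (P ++ lhs_pre r) (lhs_post r ++ S).
  move=> r_tm r_slot; rewrite /D /mvars !map_cat -!catA => H.
  apply: (Mder_rewrite_step r_tm (wf_rule_rhs (wf_tm_rules r_tm))).
  by rewrite /rhs_sterms r_slot -!catA.
have D_final : D [:: 0] [:: state_code qacc; 1].
  have := Mder_rewrite_step (D1 := [::]) (D2 := [::]) (mem_head final_rule step_rules) isT.
  by rewrite /rhs_sterms /=; apply; apply: Mder_accept.
have := D_tm_run D_step D_final Hn; rewrite /D /= => H.
apply: Mder_goal; first by case: w {Hn H} w_ne.
by rewrite input_sterms; move: H; rewrite /mvars map_cat.
Qed.

Variable M : seq Sigma -> Prop.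
Hypothesis M_accepts : forall w, M w <-> accepts (input_conf w).
Hypothesis M_nil : ~ M [::].

Lemma M_nonempty w : M w -> w <> [::].
Proof. by move=> Mw w0; rewrite w0 in Mw. Qed.

Lemma tm_grammar_M w :
  (s_rec_M tm_grammar w <-> M w) /\ (t_rec_M tm_grammar w <-> M w).
Proof.
have t_rec_M_M : t_rec_M tm_grammar w -> M w by move/t_rec_M_accepts/M_accepts.
have M_s_rec_M : M w -> s_rec_M tm_grammar w.
  move=> Mw; exists (input_formulas w); split; first exact: assigns_input_formulas.
  exact/(accepts_Mder (M_nonempty Mw))/M_accepts.
split; split=> //; first by move/s_rec_t_rec_M/t_rec_M_M.
by move/M_s_rec_M/s_rec_t_rec_M.
Qed.

Lemma tm_grammar_F w :
  (s_rec_F tm_grammar w <-> M w) /\ (t_rec_F tm_grammar w <-> M w).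
Proof.
have t_rec_F_M : t_rec_F tm_grammar w -> M w by move/t_rec_F_accepts/M_accepts.
have M_s_rec_F : M w -> s_rec_F tm_grammar w.
  move=> Mw; exists (input_formulas w); split; first exact: assigns_input_formulas.
  exact/(accepts_Fder (M_nonempty Mw))/M_accepts.
split; split=> //; first by move/s_rec_t_rec_F/t_rec_F_M.
by move/M_s_rec_F/s_rec_t_rec_F.
Qed.
End MachineGrammar.

Theorem theorem12 (Sigma : finType) (M : seq Sigma -> Prop) :
  recursively_enumerable M -> ~ M [::] ->
  (exists G : grammar Sigma,
     (forall w, s_rec_M G w <-> M w) /\ (forall w, t_rec_M G w <-> M w)) /\
  (exists G : grammar Sigma,
     (forall w, s_rec_F G w <-> M w) /\ (forall w, t_rec_F G w <-> M w)).
Proof.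
case=> Q [Gam [blank [inp [delta [q0 [qacc [_ [_ M_accepts]]]]]]]] M_nil.
split; exists (tm_grammar blank delta q0 qacc inp).
  by split=> w; have [] := tm_grammar_M M_accepts M_nil w.
by split=> w; have [] := tm_grammar_F M_accepts M_nil w.
Qed.
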